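(* Let $n$ be a positive integer that is a multiple of $3$ or a multiple of $4$. Then it is impossible to place $n-1$ queens on $\mathbb{Z}_n^2$ without conflict.
   Context: Queens are placed on distinct fields of the torus board $\mathbb{Z}_n^2$. Two queens at distinct fields $(x,y),(x',y')$ are in conflict iff $x=x'$, or $y=y'$, or $x+y=x'+y'$, or $x-y=x'-y'$ in $\mathbb{Z}_n$. A placement is without conflict if no two queens are in conflict. *)

From mathcomp Require Import all_boot.
Set Implicit Arguments. Unset Strict Implicit. Unset Printing Implicit Defensive.

Definition field (n : nat) := ('I_n * 'I_n)%type.

(* Two queens on distinct fields (x,y),(x',y') are in conflict iff
   x = x', or y = y', or x+y = x'+y', or x-y = x'-y' in Z_n.
   x - y = x' - y' (mod n) is written as x + y' = x' + y (mod n). *)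
Definition conflict (n : nat) (p q : field n) : bool :=
  [|| p.1 == q.1, p.2 == q.2,
      (p.1 + p.2 == q.1 + q.2 %[mod n]) |
      (p.1 + q.2 == q.1 + p.2 %[mod n])].

Definition conflict_free (n : nat) (Q : {set field n}) : bool :=
  [forall p in Q, forall q in Q, (p != q) ==> ~~ conflict p q].

(* The n - 1 queens leave exactly one row a, one column b, one
   antidiagonal c (x + y = c) and one diagonal e (x - y = e) unoccupied, so
   every sum over the queens of one of these coordinates, or of its square, is
   the full sum S = 0 + ... + (n-1) (resp. T = 0^2 + ... + (n-1)^2) minus the
   missing value.  Summing x + y and x - y modulo n determines c and e from a
   and b.  Summing (x + y)^2 + (x - y)^2 = 2 x^2 + 2 y^2 modulo a divisor d of
   both 2n and n^2 (for which squaring respects congruence modulo n) then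
   gives d | 2T + 2S^2.  With 2S = n(n-1) and 6T = n(n-1)(2n-1) this fails for
   d = n when 3 | n and for d = 2n when 4 | n. *)

From mathcomp Require Import all_boot all_algebra.
From mathcomp Require Import ring zify.
Import GRing.Theory.

Set Implicit Arguments.
Unset Strict Implicit.

Local Open Scope ring_scope.

Lemma dvdz_sqrB (n d t r : int) :
  (d %| 2 * n)%Z -> (d %| n ^+ 2)%Z -> (n %| t - r)%Z -> (d %| t ^+ 2 - r ^+ 2)%Z.
Proof.
move=> d_2n d_nn /dvdzP[k /eqP]; rewrite subr_eq => /eqP ->.
have -> : (k * n + r) ^+ 2 - r ^+ 2 = 2 * n * (k * r) + n ^+ 2 * k ^+ 2 by ring.
by rewrite rpredD // dvdz_mulr.
Qed.

Lemma sum_ord_int (n : nat) : 2 * \sum_(r < n) (r : int) = n%:Z * (n%:Z - 1).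
Proof.
elim: n => [|n IHn]; first by rewrite big_ord0.
by rewrite big_ord_recr /= mulrDr IHn -[n.+1]addn1 PoszD; ring.
Qed.

Lemma sum_ord_sqr_int (n : nat) :
  6 * \sum_(r < n) (r : int) ^+ 2 = n%:Z * (n%:Z - 1) * (2 * n%:Z - 1).
Proof.
elim: n => [|n IHn]; first by rewrite big_ord0.
by rewrite big_ord_recr /= mulrDr IHn -[n.+1]addn1 PoszD; ring.
Qed.

Lemma sum_image_miss_one (aT rT : finType) (V : zmodType) (f : aT -> rT) (Q : {set aT}) :
  #|Q|.+1 = #|rT| -> {in Q &, injective f} ->
  exists a, forall g : rT -> V, \sum_(p in Q) g (f p) = \sum_r g r - g a.
Proof.
move=> Q_card f_inj.
have /cards1P[a Qa] : #|~: (f @: Q)| == 1%N.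
  by rewrite -(eqn_add2l #|f @: Q|) cardsC card_in_imset // addn1 Q_card.
exists a => g; rewrite -(big_imset _ f_inj) [in RHS](bigD1 a) //= addrC addrK.
by apply: eq_bigl => r; rewrite -[r \in _]negbK -in_setC Qa in_set1.
Qed.

Lemma conflict_free_inj (n : nat) (T : Type) (Q : {set field n}) (f : field n -> T) :
  conflict_free Q -> (forall p q, f p = f q -> conflict p q) -> {in Q &, injective f}.
Proof.
move=> /forall_inP Q_free f_conflict p q pQ qQ fpq.
move/forall_inP/(_ q qQ): (Q_free p pQ).
by case: eqVneq => //= _; rewrite f_conflict.
Qed.

Definition antidiag (n : nat) (p : field n.+1) : 'I_n.+1 := p.1 + p.2.
Definition diag (n : nat) (p : field n.+1) : 'I_n.+1 := p.1 - p.2.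

Lemma row_conflict (n : nat) (p q : field n) : p.1 = q.1 -> conflict p q.
Proof. by move=> pq; rewrite /conflict pq eqxx. Qed.

Lemma col_conflict (n : nat) (p q : field n) : p.2 = q.2 -> conflict p q.
Proof. by move=> pq; rewrite /conflict pq eqxx orbT. Qed.

Lemma antidiag_conflict (n : nat) (p q : field n.+1) :
  antidiag p = antidiag q -> conflict p q.
Proof. by move/(congr1 val) => /= pq; rewrite /conflict pq eqxx !orbT. Qed.

Lemma diag_conflict (n : nat) (p q : field n.+1) : diag p = diag q -> conflict p q.
Proof.
move=> pq; have : p.1 + q.2 = q.1 + p.2 :> 'I_n.+1.
  by rewrite -(subrK p.2 p.1) -/(diag p) pq /diag addrAC subrK addrC.
by move/(congr1 val) => /= {}pq; rewrite /conflict pq eqxx !orbT.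
Qed.

Lemma dvdz_Zp_add (n : nat) (x y : 'I_n.+1) : (n.+1 %| x%:Z + y%:Z - (x + y)%R%:Z)%Z.
Proof.
rewrite (_ : nat_of_ord (x + y)%R = ((x + y) %% n.+1)%N) //.
apply/dvdzP; exists ((x + y) %/ n.+1)%N%:Z.
have := divn_eq (x + y) n.+1; lia.
Qed.

Lemma dvdz_Zp_sub (n : nat) (x y : 'I_n.+1) : (n.+1 %| x%:Z - y%:Z - (x - y)%R%:Z)%Z.
Proof.
have := dvdz_Zp_add (x - y) y; rewrite (subrK y x) => /dvdzP[k xyk].
by apply/dvdzP; exists (- k); rewrite mulNr -xyk; ring.
Qed.

Section MissingLines.

Variables (n : nat) (Q : {set field n.+1}).
Hypotheses (Q_card : #|Q| = n) (Q_free : conflict_free Q).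

Lemma missing_line (f : field n.+1 -> 'I_n.+1) :
  (forall p q, f p = f q -> conflict p q) ->
  exists a, forall g : 'I_n.+1 -> int, \sum_(p in Q) g (f p) = \sum_r g r - g a.
Proof.
move=> f_conflict; apply: sum_image_miss_one; first by rewrite Q_card card_ord.
exact: conflict_free_inj.
Qed.

Local Notation S := (\sum_(r < n.+1) (r : int)).
Local Notation T := (\sum_(r < n.+1) (r : int) ^+ 2).

Lemma queens_dvdz_sums (d : int) :
  (d %| 2 * n.+1%:Z)%Z -> (d %| n.+1%:Z ^+ 2)%Z -> (d %| 2 * T + 2 * S ^+ 2)%Z.
Proof.
move=> d_2n d_nn.
have [a row_sum] := missing_line (@row_conflict n.+1).
have [b col_sum] := missing_line (@col_conflict n.+1).
have [c antidiag_sum] := missing_line (@antidiag_conflict n).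
have [e diag_sum] := missing_line (@diag_conflict n).
have Srow := row_sum (fun r => r%:Z); have Srow2 := row_sum (fun r => r%:Z ^+ 2).
have Scol := col_sum (fun r => r%:Z); have Scol2 := col_sum (fun r => r%:Z ^+ 2).
have Santi := antidiag_sum (fun r => r%:Z); have Santi2 := antidiag_sum (fun r => r%:Z ^+ 2).
have Sdiag := diag_sum (fun r => r%:Z); have Sdiag2 := diag_sum (fun r => r%:Z ^+ 2).
have c_mod : (n.+1 %| c%:Z - (a%:Z + b%:Z - S))%Z.
  have -> : c%:Z - (a%:Z + b%:Z - S) = \sum_(p in Q) (p.1%:Z + p.2%:Z - (antidiag p)%:Z).
    by rewrite !sumrB big_split /= Srow Scol Santi; ring.
  by apply: rpred_sum => p _; apply: dvdz_Zp_add.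
have e_mod : (n.+1 %| e%:Z - (S + a%:Z - b%:Z))%Z.
  have -> : e%:Z - (S + a%:Z - b%:Z) = \sum_(p in Q) (p.1%:Z - p.2%:Z - (diag p)%:Z).
    by rewrite !sumrB /= Srow Scol Sdiag; ring.
  by apply: rpred_sum => p _; apply: dvdz_Zp_sub.
have sq_mod :
    (d %| 2 * (T - a%:Z ^+ 2) + 2 * (T - b%:Z ^+ 2) - ((T - c%:Z ^+ 2) + (T - e%:Z ^+ 2)))%Z.
  rewrite -Srow2 -Scol2 -Santi2 -Sdiag2 !mulr_sumr -!big_split -sumrB /=.
  apply: rpred_sum => p _.
  rewrite (_ : _ - _ = ((p.1%:Z + p.2%:Z) ^+ 2 - (antidiag p)%:Z ^+ 2)
                       + ((p.1%:Z - p.2%:Z) ^+ 2 - (diag p)%:Z ^+ 2)); last by ring.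
  exact: rpredD (dvdz_sqrB d_2n d_nn (dvdz_Zp_add _ _))
                (dvdz_sqrB d_2n d_nn (dvdz_Zp_sub _ _)).
have d_4Sb : (d %| 4 * S * b%:Z)%Z.
  have -> : 4 * S * b%:Z = 2 * (2 * S) * b%:Z by ring.
  by rewrite sum_ord_int mulrA; apply/dvdz_mulr/dvdz_mulr.
have c_sq := dvdz_sqrB d_2n d_nn c_mod.
have e_sq := dvdz_sqrB d_2n d_nn e_mod.
(* (a + b - S)^2 + (S + a - b)^2 = 2 a^2 + 2 b^2 + 2 S^2 - 4 S b *)
have -> : 2 * T + 2 * S ^+ 2
    = (2 * (T - a%:Z ^+ 2) + 2 * (T - b%:Z ^+ 2) - ((T - c%:Z ^+ 2) + (T - e%:Z ^+ 2)))
      - (c%:Z ^+ 2 - (a%:Z + b%:Z - S) ^+ 2) - (e%:Z ^+ 2 - (S + a%:Z - b%:Z) ^+ 2)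
      + 4 * S * b%:Z by ring.
exact: rpredD (rpredB (rpredB sq_mod c_sq) e_sq) d_4Sb.
Qed.

End MissingLines.

Lemma dvdz_ord_sums (n : nat) (k : int) : (0 < n)%N ->
  (k * n %| 2 * \sum_(r < n) (r : int) ^+ 2 + 2 * (\sum_(r < n) (r : int)) ^+ 2)%Z ->
  (6 * k %| 2 * (n%:Z - 1) * (2 * n%:Z - 1) + 3 * n%:Z * (n%:Z - 1) ^+ 2)%Z.
Proof.
move=> n_gt0 /(dvdz_mul (dvdzz 6)).
have -> : 6 * (2 * \sum_(r < n) (r : int) ^+ 2 + 2 * (\sum_(r < n) (r : int)) ^+ 2)
    = 2 * (6 * \sum_(r < n) (r : int) ^+ 2) + 3 * (2 * \sum_(r < n) (r : int)) ^+ 2 by ring.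
rewrite sum_ord_sqr_int sum_ord_int (_ : 6 * (k * n) = n%:Z * (6 * k)); last by ring.
have -> : 2 * (n%:Z * (n%:Z - 1) * (2 * n%:Z - 1)) + 3 * (n%:Z * (n%:Z - 1)) ^+ 2
    = n%:Z * (2 * (n%:Z - 1) * (2 * n%:Z - 1) + 3 * n%:Z * (n%:Z - 1) ^+ 2) by ring.
by rewrite dvdz_mul2l //; lia.
Qed.

Lemma ord_sums_not_dvdz (n : nat) : (3 %| n.+1)%N || (4 %| n.+1)%N ->
  exists d : int, [/\ (d %| 2 * n.+1%:Z)%Z, (d %| n.+1%:Z ^+ 2)%Z &
    ~~ (d %| 2 * \sum_(r < n.+1) (r : int) ^+ 2 + 2 * (\sum_(r < n.+1) (r : int)) ^+ 2)%Z].
Proof.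
case/orP=> /dvdnP[m n_eq].
- exists n.+1%:Z; rewrite dvdz_mull ?dvdz_exp //; split=> //.
  apply/negP; rewrite -[X in (X %| _)%Z]mul1r => /(dvdz_ord_sums (ltn0Sn n)).
  by rewrite n_eq; lia.
- exists (2 * n.+1%:Z); split=> //.
    by rewrite n_eq PoszM; apply/dvdzP; exists (2 * m%:Z); ring.
  apply/negP => /(dvdz_ord_sums (ltn0Sn n)).
  by rewrite n_eq; lia.
Qed.

Local Close Scope ring_scope.

Theorem mainTheorem6 (n : nat) :
  0 < n -> (3 %| n) || (4 %| n) ->
  ~ exists Q : {set field n}, #|Q| = n.-1 /\ conflict_free Q.
Proof.
case: n => [//|n] _ /ord_sums_not_dvdz[d [d_2n d_nn not_dvd]] [Q [Q_card Q_free]].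
by rewrite (queens_dvdz_sums Q_card Q_free d_2n d_nn) in not_dvd.
Qed.
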